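(* In the single expert committee under liquid democracy, there is a neutral strategy profile that maximizes the probability that the outcome matches the state among all neutral strategy profiles and under which every nonexpert who does not abstain holds at most one vote.
   Context: Single expert committee: $N$ voters with $N$ odd, all independent (payoff 1 if the outcome matches the state, $A$ with $a$ and $B$ with $b$, else 0); $N-1$ nonexperts of precision $q\in(1/2,1)$ and one expert of precision $r\in(q,1)$; prior $\Pr(\omega=a)=1/2$ for state $\omega\in\{a,b\}$; voter $i$ observes private signal $s_i$ with $\Pr(s_i=\omega\mid\omega)=q_i$, conditionally independent; precisions are common knowledge. Outcome: simple majority of votes cast, ties broken uniformly at random. Liquid democracy: each voter maps her signal to vote $A$, vote $B$, abstain, or delegate to another voter; delegation is transitive, votes in a delegation cycle are abstained, and a non-delegator casts all votes she holds (own plus delegated) for the same alternative or abstains them all. A strategy profile is neutral if each voter votes sincerely ($a$ at signal $a$, $b$ at signal $b$), abstains at both signals, or delegates to the same voter at both signals. The number of votes a voter holds is her own vote (if she does not delegate) plus all votes delegated to her directly or transitively. *)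

From HB Require Import structures.
From mathcomp Require Import all_boot all_order all_algebra.
Set Implicit Arguments. Unset Strict Implicit. Unset Printing Implicit Defensive.
Import Order.TTheory GRing.Theory Num.Theory.
Local Open Scope ring_scope.

(* A neutral action: vote sincerely (a at signal a, b at signal b),
   abstain (at both signals), or delegate to voter j (at both signals). *)
Inductive act (N : nat) : Type :=
  | Sincere
  | Abstain
  | Deleg of 'I_N.
Arguments Sincere {N}.
Arguments Abstain {N}.

Definition profile (N : nat) := 'I_N -> act N.

Definition valid_profile N (P : profile N) : Prop :=
  forall i j : 'I_N, P i = Deleg j -> j != i.

Definition is_deleg N (a : act N) : bool :=
  if a is Deleg _ then true else false.

Definition deleg_step N (P : profile N) (i : 'I_N) : 'I_N :=
  if P i is Deleg j then j else i.

(* End of the delegation chain after N steps: a non-delegator if the chain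
   terminates, otherwise (cycle) a delegator. *)
Definition guru N (P : profile N) (i : 'I_N) : 'I_N := iter N (deleg_step P) i.

(* What a voter g casts at signal profile s (true = signal a):
   Some true = vote A, Some false = vote B, None = abstained
   (also None for a delegator, which happens only for a delegation cycle). *)
Definition casts N (P : profile N) (s : {ffun 'I_N -> bool}) (g : 'I_N)
  : option bool :=
  match P g with Sincere => Some (s g) | _ => None end.

Definition countA N (P : profile N) (s : {ffun 'I_N -> bool}) : nat :=
  #|[set i : 'I_N | casts P s (guru P i) == Some true]|.
Definition countB N (P : profile N) (s : {ffun 'I_N -> bool}) : nat :=
  #|[set i : 'I_N | casts P s (guru P i) == Some false]|.

(* Probability that the outcome matches the state w (true = a), given the
   signal profile s: simple majority of votes cast, ties broken uniformly. *)
Definition correct_given {R : realFieldType} N (P : profile N) (w : bool)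
  (s : {ffun 'I_N -> bool}) : R :=
  let a := countA P s in let b := countB P s in
  if a == b then 1 / 2%:R else if (b < a)%N == w then 1 else 0.

Definition sig_prob {R : realFieldType} N (prec : 'I_N -> R) (w : bool)
  (s : {ffun 'I_N -> bool}) : R :=
  \prod_(i < N) (if s i == w then prec i else 1 - prec i).

Definition success {R : realFieldType} N (prec : 'I_N -> R) (P : profile N) : R :=
  \sum_(w : bool) (1 / 2%:R) *
    \sum_(s : {ffun 'I_N -> bool}) sig_prob prec w s * correct_given P w s.

Definition sec_prec {R : realFieldType} N (q r : R) (e : 'I_N) (i : 'I_N) : R :=
  if i == e then r else q.

Definition held N (P : profile N) (i : 'I_N) : nat :=
  (if is_deleg (P i) then 0 else 1) +
  #|[set j : 'I_N | (j != i) && [exists k : 'I_N, iter k.+1 (deleg_step P) j == i]]|.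

From HB Require Import structures.
From mathcomp Require Import all_boot all_order all_algebra.
From mathcomp Require Import ring lra zify.
Set Implicit Arguments. Unset Strict Implicit. Unset Printing Implicit Defensive.
Import Order.TTheory GRing.Theory Num.Theory.
Local Open Scope ring_scope.

(* Only the numbers of votes held by the sincere voters matter, and the signals
   of voters holding no vote can be averaged out.  Pair every signal profile
   with the one in which the expert's signal is flipped: on such a pair the
   Bayes-optimal decision follows the expert exactly when the margin [j] among
   the sincere nonexperts satisfies [(1 - r) q^j <= r (1 - q)^j], a condition
   that is downward closed in [j].  Letting every sincere nonexpert keep her
   vote and giving the expert, through delegations of abstainers, a weight at
   this threshold implements that rule, pair by pair, as well as any weighting
   with at most [N] votes in total can.  No nonexpert holds more than her own
   vote in such a profile, and the best of these finitely many profiles is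
   optimal. *)

Section Toggle.
Variables (R : realFieldType) (N : nat).
Local Notation sig := {ffun 'I_N -> bool}.

Definition toggle (j : 'I_N) (s : sig) : sig := [ffun i => (i == j) (+) s i].

Lemma toggle_eq j s : toggle j s j = ~~ s j.
Proof. by rewrite ffunE eqxx. Qed.

Lemma toggle_neq j s i : i != j -> toggle j s i = s i.
Proof. by rewrite ffunE => /negbTE ->. Qed.

Lemma toggleK j : involutive (toggle j).
Proof. by move=> s; apply/ffunP => i; rewrite !ffunE addbA addbb. Qed.

Lemma sum_toggle j (F : sig -> R) : \sum_(s : sig) F s = \sum_(s : sig) F (toggle j s).
Proof. by rewrite (reindex_inj (inv_inj (toggleK j))). Qed.

Lemma ler_sum_toggle (j : 'I_N) (F G : sig -> R) :
  (forall s : sig, s j -> F s + F (toggle j s) <= G s + G (toggle j s)) ->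
  \sum_(s : sig) F s <= \sum_(s : sig) G s.
Proof.
move=> FG.
have {}FG (s : sig) : F s + F (toggle j s) <= G s + G (toggle j s).
  case sj: (s j); first exact: FG.
  by rewrite addrC [G s + _]addrC -{2 4}(toggleK j s) FG // toggle_eq sj.
have sum2 (H : sig -> R) : \sum_s H s + \sum_s H s = \sum_s (H s + H (toggle j s)).
  by rewrite {2}(sum_toggle j) big_split.
suff : \sum_s F s + \sum_s F s <= \sum_s G s + \sum_s G s by lra.
by rewrite !sum2; apply: ler_sum => s _.
Qed.

Lemma sum_prod_toggle_inv j (g : 'I_N -> bool -> R) (k : sig -> R) :
  g j true + g j false = 1 -> (forall s, k (toggle j s) = k s) ->
  \sum_(s : sig) (\prod_i g i (s i)) * k s =
  2^-1 * \sum_(s : sig) (\prod_(i | i != j) g i (s i)) * k s.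
Proof.
move=> gj1 kj; set S := \sum_(s : sig) _.
have splitj (s : sig) :
    (\prod_i g i (s i)) * k s = g j (s j) * ((\prod_(i | i != j) g i (s i)) * k s).
  by rewrite (bigD1 j) //= mulrA.
have toggled : S = \sum_(s : sig) g j (~~ s j) * ((\prod_(i | i != j) g i (s i)) * k s).
  rewrite /S (sum_toggle j); apply: eq_bigr => s _.
  rewrite splitj kj toggle_eq; congr (_ * (_ * _)).
  by apply: eq_bigr => i /toggle_neq ->.
suff <- : S + S = \sum_(s : sig) (\prod_(i | i != j) g i (s i)) * k s by field.
rewrite {2}toggled /S -big_split /=; apply: eq_bigr => s _.
by rewrite splitj -mulrDl; case: (s j); rewrite /= ?[_ + g j true]addrC gj1 mul1r.
Qed.

Lemma eq_sum_prod_toggle_inv (l : seq 'I_N) (g g' : 'I_N -> bool -> R) (k : sig -> R) :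
  (forall i b, i \notin l -> g i b = g' i b) ->
  (forall i, i \in l -> g i true + g i false = 1 /\ g' i true + g' i false = 1) ->
  (forall i, i \in l -> forall s, k (toggle i s) = k s) ->
  \sum_(s : sig) (\prod_i g i (s i)) * k s = \sum_(s : sig) (\prod_i g' i (s i)) * k s.
Proof.
elim: l g => [|j l IH] g gg' g1 kl.
  by apply: eq_bigr => s _; congr (_ * _); apply: eq_bigr => i _; rewrite gg'.
have jl : j \in j :: l by rewrite mem_head.
pose gj i b := if i == j then g' j b else g i b.
transitivity (\sum_(s : sig) (\prod_i gj i (s i)) * k s).
  rewrite (sum_prod_toggle_inv (g1 j jl).1 (kl j jl)).
  rewrite (@sum_prod_toggle_inv j gj) ?/gj ?eqxx; [|exact: (g1 j jl).2|exact: kl].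
  congr (_ * _); apply: eq_bigr => s _; congr (_ * _).
  by apply: eq_bigr => i /negbTE ->.
apply: IH => [i b il|i il|i il]; rewrite /gj.
- by case: eqP => [-> //|/eqP ij]; apply: gg'; rewrite inE negb_or ij.
- by case: eqP => [->|_]; [split; exact: (g1 j jl).2 | apply: g1; rewrite inE il orbT].
- by apply: kl; rewrite inE il orbT.
Qed.

End Toggle.

Fixpoint last_true (ok : pred nat) (k : nat) : nat :=
  if k is k'.+1 then (if ok k then k else last_true ok k') else 0%N.

(* Margins of the parity of [m] that equal [last_true ok K] would tie against
   the expert's weight; raising it by one lets the expert decide them. *)
Definition threshold (ok : pred nat) (K m : nat) : nat :=
  let c := last_true ok K in if (c == K) || (odd c != odd m) then c else c.+1.

Section Threshold.
Variable ok : pred nat.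
Hypothesis okS : forall j, ok j.+1 -> ok j.
Hypothesis ok1 : ok 1.

Lemma ok_leq i j : (j <= i)%N -> ok i -> ok j.
Proof.
elim: i => [|i IH]; first by rewrite leqn0 => /eqP ->.
by rewrite leq_eqVlt => /orP [/eqP -> // | ji /okS]; apply: IH.
Qed.

Lemma last_true_leq k : (last_true ok k <= k)%N.
Proof. by elim: k => //= k IH; case: ifP => // _; apply: leqW. Qed.

Lemma last_true_ok k : ok (last_true ok k).
Proof. by elim: k => [|k IH] /=; [apply: okS | case: ifP]. Qed.

Lemma leq_last_true k j : (j <= k)%N -> ok j -> (j <= last_true ok k)%N.
Proof.
elim: k => [|k IH] /=; first by rewrite leqn0 => /eqP ->.
case: ifP => // okk; rewrite leq_eqVlt => /orP [/eqP -> | ]; first by rewrite okk.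
exact: IH.
Qed.

Lemma threshold_spec K m : (0 < K)%N ->
  [/\ (0 < threshold ok K m)%N, (threshold ok K m <= K)%N,
      (forall j, odd j = odd m -> ok j -> (j <= K)%N ->
          (j < threshold ok K m)%N \/ (j = threshold ok K m /\ threshold ok K m = K)) &
      (forall j, odd j = odd m -> ~~ ok j -> (threshold ok K m < j)%N)].
Proof.
move=> K0; rewrite /threshold; set c := last_true ok K.
have c0 : (0 < c)%N by apply: leq_last_true.
have cK : (c <= K)%N by apply: last_true_leq.
have lt_c j : ~~ ok j -> (c < j)%N.
  by move=> /negP nokj; rewrite ltnNge; apply/negP => /ok_leq /(_ (last_true_ok K)).
case: ifP => [cKp|/negbT]; last first.
  rewrite negb_or negbK => /andP [cneK pc]; split => //.
  - by rewrite ltn_neqAle cneK.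
  - by move=> j _ okj jK; left; rewrite ltnS leq_last_true.
  move=> j pj /lt_c cj; rewrite ltn_neqAle cj andbT.
  by apply: contra_eqN pj => /eqP <- /=; move: pc; case: (odd c); case: (odd m).
split => // [j pj okj jK|j _ /lt_c //].
have := leq_last_true jK okj; rewrite -/c leq_eqVlt => /orP [/eqP jc|]; last by left.
case/orP: cKp => [/eqP cK'|]; first by right.
by rewrite -jc pj eqxx.
Qed.

End Threshold.

Section WinProb.
Context {R : realFieldType}.

Definition win_prob (t : int) : R := if 0 < t then 1 else if t == 0 then 2^-1 else 0.

Definition correct_prob (w : bool) (t : int) : R := if w then win_prob t else 1 - win_prob t.

Lemma win_prob_gt0 t : 0 < t -> win_prob t = 1.
Proof. by rewrite /win_prob => ->. Qed.

Lemma win_prob_lt0 t : t < 0 -> win_prob t = 0.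
Proof. by move=> t0; rewrite /win_prob ltNge ltW //= lt_eqF. Qed.

Lemma win_prob0 : win_prob 0 = 2^-1.
Proof. by []. Qed.

Lemma win_probN t : win_prob (- t) = 1 - win_prob t.
Proof.
case: (ltgtP t 0) => [t0|t0|->]; last by rewrite oppr0 win_prob0; field.
- by rewrite (win_prob_lt0 t0) win_prob_gt0 ?subr0 // oppr_gt0.
- by rewrite (win_prob_gt0 t0) win_prob_lt0 ?subrr // oppr_lt0.
Qed.

Lemma win_prob_ge0 t : 0 <= win_prob t.
Proof. by rewrite /win_prob; case: ifP => _ //; case: ifP => _ //; rewrite invr_ge0 ler0n. Qed.

Lemma win_prob_le1 t : win_prob t <= 1.
Proof. by rewrite /win_prob; case: ifP => _ //; case: ifP => _ //; rewrite invf_le1 ?ler1n. Qed.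

Lemma win_prob_ge_half t : 0 <= t -> 2^-1 <= win_prob t.
Proof.
rewrite le_eqVlt => /orP [/eqP <- // | /win_prob_gt0 ->].
by rewrite invf_le1 ?ler1n.
Qed.

(* [b] says that the expert should decide at the nonexpert margin [d]; then the
   vote [d +- c] does at least as well as any vote [W +- a] whose nonexpert
   part [W] is within [K - a] of [d].  [al] and [be] are the gains from
   electing A at the expert's two signals. *)
Lemma win_prob_pair_le (al be : R) (d c K a : nat) (W : int) (b : bool) :
  `|W - d%:Z| <= K%:Z - a%:Z -> (0 < c)%N -> (c <= K)%N ->
  0 <= al -> (b -> be <= 0) -> (~~ b -> 0 <= be) ->
  (b -> (d <= K)%N -> (d < c)%N \/ (d = c /\ c = K)) -> (~~ b -> (c < d)%N) ->
  al * win_prob (W + a%:Z) + be * win_prob (W - a%:Z) <=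
  al * win_prob (d%:Z + c%:Z) + be * win_prob (d%:Z - c%:Z).
Proof.
rewrite ler_norml => /andP [Wlo Whi] c0 cK al0 bbe nbbe okc nokc.
apply: lerD.
  by rewrite (win_prob_gt0 (t := d%:Z + c%:Z)) ?ler_wpM2l ?win_prob_le1 //; lia.
case: b okc nokc bbe nbbe => [okc _ /(_ isT) be0 _ | _ /(_ isT) cd _ /(_ isT) be0]; last first.
  by rewrite (win_prob_gt0 (t := d%:Z - c%:Z)) ?ler_wpM2l ?win_prob_le1 //; lia.
apply: ler_wnM2l => //; have [dK|Kd] := leqP d K.
  case: (okc isT dK) => [dc|[dc cK']]; first by rewrite win_prob_lt0 ?win_prob_ge0 //; lia.
  by rewrite (_ : _ - _ = 0) ?win_prob_ge_half //; lia.
by rewrite !win_prob_gt0 //; lia.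
Qed.

Lemma win_prob_mix_le (u v : R) (d W : int) :
  (0 < d -> v <= u) -> (d < 0 -> u <= v) -> (d = 0 -> u = v) ->
  u * win_prob W + v * (1 - win_prob W) <= u * win_prob d + v * (1 - win_prob d).
Proof.
move=> vu uv duv; have h0 := win_prob_ge0 W; have h1 := win_prob_le1 W.
case: (ltgtP d 0) => [d0|d0|/[dup] /duv -> ->]; last by rewrite -!mulrDr !subrKC.
- rewrite (win_prob_lt0 d0) -subr_ge0.
  have -> : u * 0 + v * (1 - 0) - (u * win_prob W + v * (1 - win_prob W)) =
            (v - u) * win_prob W by ring.
  by rewrite mulr_ge0 // subr_ge0 uv.
- rewrite (win_prob_gt0 d0) -subr_ge0.
  have -> : u * 1 + v * (1 - 1) - (u * win_prob W + v * (1 - win_prob W)) =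
            (u - v) * (1 - win_prob W) by ring.
  by rewrite mulr_ge0 // subr_ge0 ?vu.
Qed.

(* Probability of a correct outcome on the two signal profiles that differ only
   in the signal of an expert of precision [r], up to the prior 1/2: [u] and
   [v] are the probabilities of the other signals in states a and b, and [h],
   [h'] the probabilities that A wins when the expert's signal is a, resp. b. *)
Definition pair_value (r u v h h' : R) : R :=
  r * u * h + (1 - r) * v * (1 - h) + (1 - r) * u * h' + r * v * (1 - h').

Lemma pair_valueE r u v h h' : pair_value r u v h h' =
  v + ((r * u - (1 - r) * v) * h + ((1 - r) * u - r * v) * h').
Proof. by rewrite /pair_value; ring. Qed.

Lemma pair_value_diag r u v h : pair_value r u v h h = u * h + v * (1 - h).
Proof. by rewrite /pair_value; ring. Qed.

Lemma pair_value_mirror r u v h h' :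
  pair_value r u v h h' = pair_value r v u (1 - h') (1 - h).
Proof. by rewrite /pair_value; ring. Qed.

End WinProb.

Section Precisions.
Variables (R : realFieldType) (q r : R).
Hypotheses (hq : 2^-1 < q) (hq1 : q < 1) (hqr : q < r).

Let q_gt0 : 0 < q. Proof. by move: hq; lra. Qed.
Let q'_ge0 : 0 <= 1 - q. Proof. by move: hq1; lra. Qed.
Let q'_le_q : 1 - q <= q. Proof. by move: hq; lra. Qed.
Let r_ge0 : 0 <= r. Proof. by move: hq hqr; lra. Qed.
Let r'_le_r : 1 - r <= r. Proof. by move: hq hqr; lra. Qed.

Definition expert_outweighs (j : nat) : bool := (1 - r) * q ^+ j <= r * (1 - q) ^+ j.

Lemma expert_outweighs1 : expert_outweighs 1.
Proof.
rewrite /expert_outweighs !expr1 -subr_le0.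
have -> : (1 - r) * q - r * (1 - q) = q - r by ring.
by rewrite subr_le0 ltW.
Qed.

Lemma expert_outweighsS j : expert_outweighs j.+1 -> expert_outweighs j.
Proof.
rewrite /expert_outweighs !exprS => le_j1; rewrite -(ler_pM2l q_gt0).
apply: le_trans (_ : _ <= (1 - q) * (r * (1 - q) ^+ j)) _.
  by rewrite mulrCA [X in _ <= X]mulrCA.
by rewrite ler_wpM2r // mulr_ge0 ?exprn_ge0.
Qed.

Lemma expert_with_majority j : (1 - r) * (1 - q) ^+ j <= r * q ^+ j.
Proof.
apply: le_trans (ler_wpM2r (exprn_ge0 j q'_ge0) r'_le_r) (ler_wpM2l r_ge0 _).
by rewrite lerXn2r ?nnegrE // ltW.
Qed.

Lemma likelihood_le (Z : R) (n p : nat) : 0 <= Z -> (n <= p)%N ->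
  q ^+ n * (1 - q) ^+ p * Z <= q ^+ p * (1 - q) ^+ n * Z.
Proof.
move=> Z0 /subnKC <-; rewrite !exprD -!mulrA.
apply: ler_wpM2l; first exact: exprn_ge0 (ltW q_gt0).
rewrite [X in _ <= X]mulrCA; apply: ler_wpM2l; first exact: exprn_ge0.
by apply: ler_wpM2r => //; apply: lerXn2r; rewrite ?nnegrE ?(ltW q_gt0).
Qed.

Lemma majority_pair_le (Z : R) (p n : nat) (W : int) : 0 <= Z ->
  pair_value r (q ^+ p * (1 - q) ^+ n * Z) (q ^+ n * (1 - q) ^+ p * Z)
    (win_prob W) (win_prob W) <=
  pair_value r (q ^+ p * (1 - q) ^+ n * Z) (q ^+ n * (1 - q) ^+ p * Z)
    (win_prob (p%:Z - n%:Z)) (win_prob (p%:Z - n%:Z)).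
Proof.
move=> Z0; rewrite !pair_value_diag; apply: win_prob_mix_le => d.
- by apply: likelihood_le => //; lia.
- by apply: likelihood_le => //; lia.
- by have -> : p = n by lia.
Qed.

Lemma threshold_pair_le_nonneg (Z : R) (p n a K : nat) (W : int) :
  0 <= Z -> (0 < K)%N -> `|W - (p%:Z - n%:Z)| <= K%:Z - a%:Z -> (n <= p)%N ->
  pair_value r (q ^+ p * (1 - q) ^+ n * Z) (q ^+ n * (1 - q) ^+ p * Z)
    (win_prob (W + a%:Z)) (win_prob (W - a%:Z)) <=
  pair_value r (q ^+ p * (1 - q) ^+ n * Z) (q ^+ n * (1 - q) ^+ p * Z)
    (win_prob (p%:Z - n%:Z + (threshold expert_outweighs K (p + n))%:Z))
    (win_prob (p%:Z - n%:Z - (threshold expert_outweighs K (p + n))%:Z)).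
Proof.
move=> Z0 K0 HW /subnKC; move: (p - n)%N => j pnj; subst p.
have [c0 cK okc nokc] := threshold_spec expert_outweighsS expert_outweighs1 (n + j + n) K0.
set c := threshold _ _ _ in HW c0 cK okc nokc *.
set Y := q ^+ n * (1 - q) ^+ n * Z.
have Y0 : 0 <= Y by rewrite /Y !mulr_ge0 // exprn_ge0 // ltW.
have dj : (n + j)%:Z - n%:Z = j%:Z by lia.
rewrite dj in HW *; rewrite !exprD !pair_valueE lerD2l.
have -> : q ^+ n * q ^+ j * (1 - q) ^+ n * Z = Y * q ^+ j by rewrite /Y; ring.
have -> : q ^+ n * ((1 - q) ^+ n * (1 - q) ^+ j) * Z = Y * (1 - q) ^+ j by rewrite /Y; ring.
have par : odd j = odd (n + j + n) by rewrite addnAC addnn oddD odd_double.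
apply: (win_prob_pair_le (K := K) (b := expert_outweighs j)) => //.
- by rewrite ![_ * (Y * _)]mulrCA -mulrBr mulr_ge0 // subr_ge0 expert_with_majority.
- by move=> ok_j; rewrite ![_ * (Y * _)]mulrCA -mulrBr mulr_ge0_le0 // subr_le0.
- move=> nok_j; rewrite ![_ * (Y * _)]mulrCA -mulrBr mulr_ge0 // subr_ge0 ltW //.
  by rewrite ltNge.
- exact: okc par.
- exact: nokc par.
Qed.

Lemma threshold_pair_le (Z : R) (p n a K : nat) (W : int) :
  0 <= Z -> (0 < K)%N -> `|W - (p%:Z - n%:Z)| <= K%:Z - a%:Z ->
  pair_value r (q ^+ p * (1 - q) ^+ n * Z) (q ^+ n * (1 - q) ^+ p * Z)
    (win_prob (W + a%:Z)) (win_prob (W - a%:Z)) <=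
  pair_value r (q ^+ p * (1 - q) ^+ n * Z) (q ^+ n * (1 - q) ^+ p * Z)
    (win_prob (p%:Z - n%:Z + (threshold expert_outweighs K (p + n))%:Z))
    (win_prob (p%:Z - n%:Z - (threshold expert_outweighs K (p + n))%:Z)).
Proof.
move=> Z0 K0 HW; have [|/ltnW np] := leqP n p; first exact: threshold_pair_le_nonneg.
have := threshold_pair_le_nonneg (W := - W) (p := n) (n := p) (a := a) Z0 K0 _ np.
rewrite -normrN opprD opprK opprB => /(_ HW).
rewrite pair_value_mirror [X in _ <= X]pair_value_mirror -!win_probN addnC.
by rewrite !opprD !opprK ![- (n%:Z) + _]addrC.
Qed.
End Precisions.

Section Weights.
Variables (R : realFieldType) (N : nat).
Local Notation sig := {ffun 'I_N -> bool}.
Implicit Types (wt : 'I_N -> nat) (prec : 'I_N -> R) (s : sig).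

Definition sign (b : bool) : int := if b then 1 else -1.

Definition margin wt s : int := \sum_g (wt g)%:Z * sign (s g).

Definition margin_without (e : 'I_N) wt s : int := \sum_(g | g != e) (wt g)%:Z * sign (s g).

Definition wsuccess prec wt : R :=
  \sum_(w : bool) (1 / 2%:R) * \sum_(s : sig) sig_prob prec w s * correct_prob w (margin wt s).

Lemma eq_wsuccess prec wt wt' : wt =1 wt' -> wsuccess prec wt = wsuccess prec wt'.
Proof.
move=> eq_wt; have eq_margin s : margin wt s = margin wt' s.
  by apply: eq_bigr => g _; rewrite eq_wt.
by apply: eq_bigr => w _; congr (_ * _); apply: eq_bigr => s _; rewrite eq_margin.
Qed.

Lemma margin_toggle0 wt j s : wt j = 0%N -> margin wt (toggle j s) = margin wt s.
Proof.
move=> wt0; apply: eq_bigr => g _.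
by case: (eqVneq g j) => [->|/toggle_neq -> //]; rewrite wt0 !mul0r.
Qed.

Lemma margin_split e wt s : margin wt s = margin_without e wt s + (wt e)%:Z * sign (s e).
Proof. by rewrite /margin (bigD1 e) // addrC. Qed.

Lemma margin_without_toggle e wt s : margin_without e wt (toggle e s) = margin_without e wt s.
Proof. by apply: eq_bigr => g /toggle_neq ->. Qed.

Definition coin_outside prec (T : {set 'I_N}) (i : 'I_N) : R :=
  if i \in T then prec i else 2^-1.

Lemma wsuccess_coin_outside prec (T : {set 'I_N}) wt : (forall g, g \notin T -> wt g = 0%N) ->
  wsuccess prec wt = wsuccess (coin_outside prec T) wt.
Proof.
move=> wt0; apply: eq_bigr => w _; congr (_ * _).
apply: (eq_sum_prod_toggle_inv (l := enum (~: T))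
  (g := fun i b => if b == w then prec i else 1 - prec i)
  (g' := fun i b => if b == w then coin_outside prec T i else 1 - coin_outside prec T i)
  (k := fun s => correct_prob w (margin wt s))) => i; rewrite mem_enum inE.
- by move=> b; rewrite negbK /coin_outside => ->.
- by rewrite /coin_outside => /negbTE ->; case: w; rewrite /= ?subrKC ?subrK.
- by move=> /wt0 wti s; rewrite margin_toggle0.
Qed.

Definition others_prob prec (e : 'I_N) (w : bool) s : R :=
  \prod_(i | i != e) (if s i == w then prec i else 1 - prec i).

Lemma sig_prob_split prec e w s :
  sig_prob prec w s = (if s e == w then prec e else 1 - prec e) * others_prob prec e w s.
Proof. by rewrite /sig_prob (bigD1 e). Qed.

Lemma others_prob_toggle prec e w s : others_prob prec e w (toggle e s) = others_prob prec e w s.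
Proof. by apply: eq_bigr => i /toggle_neq ->. Qed.

Lemma wsuccess_le_pairs prec e wt wt' :
  (forall s, s e ->
     pair_value (prec e) (others_prob prec e true s) (others_prob prec e false s)
       (win_prob (margin wt s)) (win_prob (margin wt (toggle e s))) <=
     pair_value (prec e) (others_prob prec e true s) (others_prob prec e false s)
       (win_prob (margin wt' s)) (win_prob (margin wt' (toggle e s)))) ->
  wsuccess prec wt <= wsuccess prec wt'.
Proof.
move=> pair_le.
pose X wt0 s := \sum_(w : bool) 1 / 2%:R * (sig_prob prec w s * correct_prob w (margin wt0 s)).
have wsuccessE wt0 : wsuccess prec wt0 = \sum_s X wt0 s.
  by rewrite /X exchange_big; apply: eq_bigr => w _; rewrite mulr_sumr.
have pairE wt0 s : s e -> X wt0 s + X wt0 (toggle e s) =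
    2^-1 * pair_value (prec e) (others_prob prec e true s) (others_prob prec e false s)
             (win_prob (margin wt0 s)) (win_prob (margin wt0 (toggle e s))).
  move=> se; rewrite /X !big_bool !(sig_prob_split _ e) !others_prob_toggle toggle_eq se.
  by rewrite /correct_prob /pair_value /=; field.
rewrite !wsuccessE; apply: (ler_sum_toggle (j := e)) => s se.
by rewrite !pairE // ler_wpM2l ?pair_le // invr_ge0 ler0n.
Qed.

End Weights.

Section ExpertWeights.
Variables (R : realFieldType) (N : nat) (q r : R) (e : 'I_N) (V : {set 'I_N}).
Hypotheses (hq : 2^-1 < q) (hq1 : q < 1) (hqr : q < r).
Local Notation sig := {ffun 'I_N -> bool}.
Implicit Types s : sig.
Local Notation A := (V :\ e).
Local Notation prec := (coin_outside (sec_prec q r e) (e |: V)).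

(* [N - #|A|] is the largest weight the expert can hold when every sincere
   nonexpert keeps her own vote. *)
Definition expert_weight : nat :=
  if e \in V then threshold (expert_outweighs q r) (N - #|A|) #|A| else 0.

Definition expert_weights (g : 'I_N) : nat := if g == e then expert_weight else g \in V.

Lemma card_setD1_lt : (#|A| < N)%N.
Proof.
rewrite -[X in (_ < X)%N]card_ord; apply: proper_card; apply/properP.
by split; [apply/subsetP | exists e; rewrite ?setD11].
Qed.

Lemma expert_weight_bounds : e \in V -> (0 < expert_weight <= N - #|A|)%N.
Proof.
move=> eV; rewrite /expert_weight eV.
have K0 : (0 < N - #|A|)%N by rewrite subn_gt0 card_setD1_lt.
have [c0 cK _ _] :=
  threshold_spec (expert_outweighsS hq hq1 hqr) (expert_outweighs1 hqr) #|A| K0.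
by rewrite c0 cK.
Qed.

Lemma card_pos_neg s : (#|[set i in A | s i]| + #|[set i in A | ~~ s i]|)%N = #|A|.
Proof.
rewrite -(cardsID [set i | s i] A); congr (_ + _)%N; apply: eq_card => i;
  by rewrite !inE; case: (s i); rewrite ?andbT ?andbF.
Qed.

Lemma margin_without_expert_weights s : margin_without e expert_weights s =
  #|[set i in A | s i]|%:Z - #|[set i in A | ~~ s i]|%:Z.
Proof.
transitivity (\sum_(g in A) sign (s g)).
  rewrite /margin_without big_mkcond [RHS]big_mkcond; apply: eq_bigr => g _.
  by rewrite /expert_weights !inE; case: eqP => //= _; case: (g \in V); rewrite ?mul1r ?mul0r.
rewrite (bigID (fun g => s g)) /= (eq_bigr (fun _ => 1)) => [|g /andP [_ ->] //].
rewrite [X in _ + X](eq_bigr (fun _ => -1)) => [|g /andP [_ /negbTE ->] //].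
rewrite !sumr_const mulNrn; congr (_ - _); rewrite natz; congr Posz;
  by apply: eq_card => i; rewrite [RHS]inE.
Qed.

Lemma others_probE w s : others_prob prec e w s =
  (if w then q else 1 - q) ^+ #|[set i in A | s i]| *
  (if w then 1 - q else q) ^+ #|[set i in A | ~~ s i]| * 2^-1 ^+ #|~: (e |: V)|.
Proof.
have precV i : i != e -> prec i = if i \in V then q else 2^-1.
  by rewrite /coin_outside /sec_prec !inE => /negbTE ->; case: (i \in V).
rewrite /others_prob (bigID [pred i | i \in V]) /= (bigID [pred i | s i]) /= -!prodr_const.
congr (_ * _ * _); apply: eq_big => i; rewrite ?inE ?negb_or ?andbA //.
- by case/andP => /andP [/precV -> ->] ->; case: w.
- by case/andP => /andP [/precV -> ->] /negbTE ->; case: w.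
- by case/andP => /precV -> /negbTE ->; case: (_ == _) => //; field.
Qed.

Section Dominated.
Variable wt : 'I_N -> nat.
Hypotheses (wt_out : forall g, g \notin V -> wt g = 0%N)
  (wt_in : forall g, g \in V -> (0 < wt g)%N) (wt_sum : (\sum_g wt g <= N)%N).

Lemma margin_without_bound s :
  `|margin_without e wt s - margin_without e expert_weights s| <= (N - #|A|)%:Z - (wt e)%:Z.
Proof.
have ew_le g : g != e -> (expert_weights g <= wt g)%N.
  by rewrite /expert_weights => /negbTE ->; case: (boolP (g \in V)) => //= /wt_in.
have ew_sum : (\sum_(g | g != e) expert_weights g)%N = #|A|.
  rewrite (eq_bigr (fun g => nat_of_bool (g \in V))) => [|g /negbTE ge]; last first.
    by rewrite /expert_weights ge.
  by rewrite -big_mkcondr /= sum1_card; apply: eq_card => i; rewrite !inE.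
have wt_sum' : (\sum_(g | g != e) wt g + wt e <= N)%N.
  by move: wt_sum; rewrite (bigD1 e) //= addnC.
rewrite /margin_without -sumrB.
rewrite (eq_bigr (fun g => ((wt g)%:Z - (expert_weights g)%:Z) * sign (s g))) => [|g _];
  last by rewrite mulrBl.
apply: le_trans (ler_norm_sum _ _ _) _.
apply: le_trans (_ : _ <= \sum_(g | g != e) ((wt g)%:Z - (expert_weights g)%:Z)) _.
  apply: ler_sum => g ge; rewrite normrM ger0_norm ?subr_ge0 ?lez_nat ?ew_le //.
  by case: (s g); rewrite /sign ?normrN normr1 mulr1.
rewrite sumrB -!(big_morph Posz PoszD (erefl _)) ew_sum.
move: wt_sum' card_setD1_lt; lia.
Qed.

Lemma expert_weights_pair_le s : s e ->
  pair_value r (others_prob prec e true s) (others_prob prec e false s)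
    (win_prob (margin wt s)) (win_prob (margin wt (toggle e s))) <=
  pair_value r (others_prob prec e true s) (others_prob prec e false s)
    (win_prob (margin expert_weights s)) (win_prob (margin expert_weights (toggle e s))).
Proof.
move=> se; have HW := margin_without_bound s.
rewrite !(margin_split e) !margin_without_toggle toggle_eq se /sign /= !mulr1 !mulrN1.
rewrite !others_probE /= [(1 - q) ^+ _ * _]mulrC margin_without_expert_weights.
rewrite /expert_weights eqxx; rewrite margin_without_expert_weights in HW.
have Z0 : 0 <= 2^-1 ^+ #|~: (e |: V)| :> R by rewrite exprn_ge0 // invr_ge0 ler0n.
case: (boolP (e \in V)) => eV.
  rewrite /expert_weight eV -(card_pos_neg s) in HW *.
  apply: threshold_pair_le => //; move: card_setD1_lt; rewrite -(card_pos_neg s); lia.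
rewrite /expert_weight (negbTE eV) wt_out // addr0 subr0.
exact: majority_pair_le.
Qed.

Lemma wsuccess_le_expert_weights :
  wsuccess (sec_prec q r e) wt <= wsuccess (sec_prec q r e) expert_weights.
Proof.
rewrite (@wsuccess_coin_outside _ _ _ (e |: V) wt) => [|g]; last first.
  by rewrite !inE negb_or => /andP [_ /wt_out].
rewrite (@wsuccess_coin_outside _ _ _ (e |: V) expert_weights) => [|g]; last first.
  by rewrite !inE negb_or /expert_weights => /andP [/negbTE -> /negbTE ->].
apply: (wsuccess_le_pairs (e := e)) => s se.
have -> : prec e = r by rewrite /coin_outside setU11 /sec_prec eqxx.
exact: expert_weights_pair_le.
Qed.

End Dominated.

End ExpertWeights.

Section Profiles.
Variables (R : realFieldType) (N : nat).
Local Notation sig := {ffun 'I_N -> bool}.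
Implicit Types (P : profile N) (s : sig).

Definition is_sincere (a : act N) : bool := if a is Sincere then true else false.

Definition weight P (g : 'I_N) : nat :=
  if is_sincere (P g) then #|[set i | guru P i == g]| else 0.

Lemma card_guru P (C : pred 'I_N) :
  #|[set i | C (guru P i)]| = (\sum_g #|[set i | guru P i == g]| * C g)%N.
Proof.
rewrite -sum1_card big_mkcond /= (partition_big (guru P) predT) //=.
apply: eq_bigr => g _; rewrite (eq_bigr (fun _ => nat_of_bool (C g))) => [|i /eqP <-].
  rewrite sum_nat_const; congr (_ * _)%N; apply: eq_card => i; by rewrite !inE.
by rewrite inE; case: (C _).
Qed.

Lemma countA_weight P s : countA P s = (\sum_g weight P g * s g)%N.
Proof.
rewrite /countA (card_guru P (fun g => casts P s g == Some true)); apply: eq_bigr => g _.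
by rewrite /weight /casts; case: (P g); rewrite ?muln0 ?mul0n //=; case: (s g).
Qed.

Lemma countB_weight P s : countB P s = (\sum_g weight P g * ~~ s g)%N.
Proof.
rewrite /countB (card_guru P (fun g => casts P s g == Some false)); apply: eq_bigr => g _.
by rewrite /weight /casts; case: (P g); rewrite ?muln0 ?mul0n //=; case: (s g).
Qed.

Lemma margin_weight P s : margin (weight P) s = (countA P s)%:Z - (countB P s)%:Z.
Proof.
rewrite countA_weight countB_weight !(big_morph Posz PoszD (erefl _)) -sumrB.
apply: eq_bigr => g _.
by case: (s g); rewrite /sign /= ?muln1 ?muln0 ?subr0 ?sub0r ?mulrN1 ?mulr1.
Qed.

Lemma correct_given_margin P w s :
  correct_given P w s = correct_prob w (margin (weight P) s) :> R.
Proof.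
rewrite margin_weight /correct_given /correct_prob.
case: (ltngtP (countA P s) (countB P s)) => [ab|ba|->].
- by rewrite win_prob_lt0 ?subr_lt0 ?ltz_nat //; case: w; rewrite ?subr0.
- by rewrite win_prob_gt0 ?subr_gt0 ?ltz_nat //; case: w; rewrite ?subrr.
- by rewrite subrr win_prob0 div1r; case: w => //; field.
Qed.

Lemma success_weight (prec : 'I_N -> R) P : success prec P = wsuccess prec (weight P).
Proof.
apply: eq_bigr => w _; congr (_ * _).
by apply: eq_bigr => s _; rewrite correct_given_margin.
Qed.

Lemma guru_sincere P g : is_sincere (P g) -> guru P g = g.
Proof. by move=> sg; apply: iter_fix; rewrite /deleg_step; case: (P g) sg. Qed.

Lemma weight_gt0 P g : is_sincere (P g) -> (0 < weight P g)%N.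
Proof.
by move=> sg; rewrite /weight sg; apply/card_gt0P; exists g; rewrite inE guru_sincere.
Qed.

Lemma sum_weight P : (\sum_g weight P g <= N)%N.
Proof.
apply: leq_trans (_ : _ <= \sum_g #|[set i | guru P i == g]|)%N _.
  by apply: leq_sum => g _; rewrite /weight; case: ifP.
have := card_guru P predT; rewrite cardsT card_ord.
by under [X in (_ = X)%N -> _]eq_bigr do rewrite muln1; move=> <-.
Qed.

Variable e : 'I_N.

Definition expert_profile (S D : {set 'I_N}) : profile N := fun i =>
  if i \in S then Sincere else if (e \in S) && (i \in D) then Deleg e else Abstain.

Lemma expert_profile_valid S D : valid_profile (expert_profile S D).
Proof.
move=> i j; rewrite /expert_profile; case: ifP => // iS; case: ifP => // /andP [eS _] [<-].
by apply: contraFneq iS => <-.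
Qed.

Lemma iter_deleg_step_expert_profile S D k x :
  iter k.+1 (deleg_step (expert_profile S D)) x =
  if [&& x \notin S, e \in S & x \in D] then e else x.
Proof.
have step y : deleg_step (expert_profile S D) y =
    if [&& y \notin S, e \in S & y \in D] then e else y.
  by rewrite /deleg_step /expert_profile; case: (y \in S) => //=; case: (_ && _).
elim: k => [|k IH]; first exact: step.
rewrite iterS IH step.
by case hx: [&& x \notin S, e \in S & x \in D]; rewrite ?if_same ?hx.
Qed.

Lemma guru_expert_profile S D x :
  guru (expert_profile S D) x = if [&& x \notin S, e \in S & x \in D] then e else x.
Proof.
have iter_pos k : (0 < k)%N -> iter k (deleg_step (expert_profile S D)) x =
    if [&& x \notin S, e \in S & x \in D] then e else x.
  by case: k => // k _; apply: iter_deleg_step_expert_profile.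
exact/iter_pos/(leq_ltn_trans (leq0n x) (ltn_ord x)).
Qed.

Lemma weight_expert_profile (S D : {set 'I_N}) : D \subset ~: S ->
  weight (expert_profile S D) =1
  fun g => if g == e then (if e \in S then #|D|.+1 else 0%N) else nat_of_bool (g \in S).
Proof.
move=> DS g; have eD : e \in S -> e \notin D.
  by move=> eS; apply: contraL eS => /(subsetP DS); rewrite inE.
have guruD x : x \in D -> x \notin S by move/(subsetP DS); rewrite inE.
rewrite /weight {1}/expert_profile; case: (eqVneq g e) => [->|ge].
  case eS: (e \in S) => //=.
  suff -> : [set i | guru (expert_profile S D) i == e] = e |: D by rewrite cardsU1 eD.
  apply/setP => i; rewrite !inE guru_expert_profile eS /=.
  case iD: (i \in D); last by rewrite andbF orbF.
  by rewrite (guruD i iD) eqxx orbT.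
case gS: (g \in S) => /=; last by case: (_ && _).
suff -> : [set i | guru (expert_profile S D) i == g] = [set g] by rewrite cards1.
apply/setP => i; rewrite !inE guru_expert_profile.
case: ifP => [/and3P [iS _ _]|_]; last by [].
by rewrite eq_sym (negbTE ge); apply/esym/negbTE; apply: contraNneq iS => ->.
Qed.

Lemma held_expert_profile (S D : {set 'I_N}) i :
  i != e -> (held (expert_profile S D) i <= 1)%N.
Proof.
move=> ie; rewrite /held; set Q := [set j | _].
suff -> : Q = set0 by rewrite cards0 addn0; case: (is_deleg _).
apply/setP => j; rewrite !inE; apply/negbTE; rewrite negb_and negbK.
apply/orP; case: (eqVneq j i) => [|ji]; [by left | right].
apply/existsPn => k; rewrite iter_deleg_step_expert_profile.
by case: ifP => // _; rewrite eq_sym.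
Qed.

End Profiles.

Lemma exists_subset_card (T : finType) (A : {set T}) k : (k <= #|A|)%N ->
  exists2 B : {set T}, B \subset A & #|B| = k.
Proof.
case/card_geqP => s [us <- sA]; exists [set x in s].
  by apply/subsetP => x; rewrite inE => /sA.
by rewrite cardsE; apply/card_uniqP.
Qed.

Lemma success_le_expert_profile (R : realFieldType) (N : nat) (q r : R) (e : 'I_N)
    (P : profile N) :
  2^-1 < q -> q < 1 -> q < r ->
  exists S D, success (sec_prec q r e) P <= success (sec_prec q r e) (expert_profile e S D).
Proof.
move=> hq hq1 hqr; set V := [set g | is_sincere (P g)].
have [D DV cardD] : exists2 D : {set 'I_N}, D \subset ~: V &
    (e \in V -> #|D|.+1 = expert_weight q r e V).
  case: (boolP (e \in V)) => eV; last by exists set0; rewrite ?sub0set.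
  have [w0 wN] := andP (expert_weight_bounds hq hq1 hqr eV).
  have cardVC : #|~: V| = (N - #|V :\ e|).-1.
    by have := cardsC V; rewrite card_ord (cardsD1 e V) eV; lia.
  have [D DV cD] : exists2 D : {set 'I_N},
      D \subset ~: V & #|D| = (expert_weight q r e V).-1.
    by apply: exists_subset_card; rewrite cardVC -!subn1 leq_sub2r.
  by exists D => // _; rewrite cD prednK.
exists V, D; rewrite !success_weight.
rewrite [X in _ <= X](@eq_wsuccess _ _ _ _ (expert_weights q r e V)) => [|g]; last first.
  rewrite weight_expert_profile // /expert_weights; case: eqP => // _.
  by case: (boolP (e \in V)) => [/cardD|/negbTE eV]; rewrite /expert_weight ?eV.
apply: (wsuccess_le_expert_weights e hq hq1 hqr _ _ (sum_weight P)) => g.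
- by rewrite inE /weight => /negbTE ->.
- by rewrite inE => /weight_gt0.
Qed.

Theorem lemma7 (R : realFieldType) (N : nat) (q r : R) (e : 'I_N) :
  odd N -> 1 / 2%:R < q -> q < 1 -> q < r -> r < 1 ->
  exists P : profile N,
    [/\ valid_profile P,
        (forall P' : profile N, valid_profile P' ->
           success (sec_prec q r e) P' <= success (sec_prec q r e) P)
      & (forall i : 'I_N, i != e -> P i <> Abstain -> (held P i <= 1)%N)].
Proof.
move=> _; rewrite div1r => hq hq1 hqr _.
pose value SD := success (sec_prec q r e) (expert_profile e SD.1 SD.2).
pose best := [arg max_(SD > (set0, set0)) value SD]%O.
exists (expert_profile e best.1 best.2); split.
- exact: expert_profile_valid.
- move=> P _; have [S [D le_PSD]] := success_le_expert_profile e P hq hq1 hqr.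
  by apply: le_trans le_PSD _; rewrite /best; case: arg_maxP => // SD _ /(_ (S, D)); apply.
- by move=> i ie _; apply: held_expert_profile.
Qed.
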